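(* Let $p,q,r\in(0,1)$ with $p+q+r=1$. Let $X_1,\eta_2,\eta_3,\ldots$ be independent random variables, each taking the values $1,-1,0$ with probabilities $p,q,r$ respectively. Set $X_{n+1}=\eta_{n+1}X_1$ for $n\ge1$ and $S_n=\sum_{k=1}^nX_k$. Then, as $n\to\infty$, $S_n/n$ converges in distribution to a random variable taking the value $p-q$ with probability $p$, the value $0$ with probability $r$, and the value $-(p-q)$ with probability $q$. Moreover, $E(S_n/n)\to(p-q)^2$ and $\operatorname{Var}(S_n/n)\to(p-q)^2\big(p+q-(p-q)^2\big)$ as $n\to\infty$.
   Context: This is the elephant random walk with delays in which the elephant remembers only the first step: each later step repeats the first step with probability $p$, reverses it with probability $q$, or equals $0$ with probability $r$. *)

From HB Require Import structures.
From mathcomp Require Import all_boot all_order all_algebra.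
From mathcomp Require Import all_classical all_reals all_analysis.
Set Implicit Arguments. Unset Strict Implicit. Unset Printing Implicit Defensive.
Import Order.TTheory GRing.Theory Num.Theory.
Import numFieldNormedType.Exports.
Local Open Scope classical_set_scope.
Local Open Scope ring_scope.

Definition mutually_independent {d} {T : measurableType d} {R : realType}
  (P : probability T R) (I : set nat) (Y : nat -> T -> R) : Prop :=
  forall (J : seq nat) (B : nat -> set R),
    uniq J -> {subset J <= I} -> (forall j, measurable (B j)) ->
    P (\bigcap_(j in [set` J]) (Y j @^-1` B j)) =
    (\prod_(j <- J) P (Y j @^-1` B j))%E.

(* Convergence in distribution (weak convergence) of the real random
   variables (Z n) towards a finitely supported law given by a list of
   (atom, mass) pairs: for every bounded continuous f, E[f(Z_n)] tends to the
   expectation of f under the limit law, \sum mass * f atom. *)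
Definition finite_law_expectation {R : realType} (law : seq (R * R))
  (f : R -> R) : R := \sum_(a <- law) a.2 * f a.1.

Definition converges_in_distribution_to_finite_law {d} {T : measurableType d}
  {R : realType} (P : probability T R) (Z : nat -> T -> R)
  (law : seq (R * R)) : Prop :=
  forall f : R -> R, continuous f -> (exists M : R, forall x, `|f x| <= M) ->
    ((fun n => 'E_P[f \o Z n]) @ \oo --> (finite_law_expectation law f)%:E)%E.

Definition erw_X {T : Type} {R : realType} (X1 : T -> R) (eta : nat -> T -> R)
  (n : nat) : T -> R :=
  fun t => if (n <= 1)%N then X1 t else eta n t * X1 t.

Definition erw_S {T : Type} {R : realType} (X1 : T -> R) (eta : nat -> T -> R)
  (n : nat) : T -> R :=
  fun t => \sum_(1 <= k < n.+1) erw_X X1 eta k t.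

(* Since X_(k+1) = eta_(k+1) X_1, the walk factors as S_(n+1) = X_1 W_n with
   W_n = 1 + eta_2 + ... + eta_(n+1), and X_1 is independent of the eta_k.
   Independence makes the expectation of a product of functions of distinct
   steps the product of their ternary means, so E[X_1 W_n], E[X_1^2 W_n] and
   E[X_1^2 W_n^2] are explicit polynomials in n; this gives the mean and the
   variance of S_n / n. The same moments show E[(S_n / n - (p - q) X_1)^2] =
   O(1/n). A bounded continuous f satisfies |f x0 - f x| <= e + K (x - x0)^2 at
   the three values x0 of (p - q) X_1, hence E f(S_n / n) tends to
   E f((p - q) X_1), the expectation of f under the limit law.
   The steps are only almost surely {1, -1, 0}-valued: composing them with [rho]
   gives an almost surely equal family that is {1, -1, 0}-valued everywhere, on
   which all the computations take place. *)

From HB Require Import structures.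
From mathcomp Require Import all_boot all_order all_algebra.
From mathcomp Require Import all_classical all_reals all_analysis.
From mathcomp Require Import ring lra zify measurable_realfun.
Import Order.TTheory GRing.Theory Num.Theory.
Import numFieldNormedType.Exports.
Local Open Scope classical_set_scope.
Local Open Scope ring_scope.
Set Implicit Arguments. Unset Strict Implicit. Unset Printing Implicit Defensive.

Section limits.
Context {R : realType}.

Lemma cvg_harmonic_poly (A B C : R) :
  (fun n => A + B * harmonic n + C * (harmonic n * harmonic n)) @ \oo --> A.
Proof.
have h := @cvg_harmonic R.
have H := cvgD (cvgD (cvg_cst A) (cvgM (cvg_cst B) h)) (cvgM (cvg_cst C) (cvgM h h)).
rewrite !mulr0 !addr0 in H; exact: H.
Qed.

Lemma cvg_ratio_linear (a b : R) :
  (fun n : nat => (a + b * n%:R) / n.+1%:R) @ \oo --> b.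
Proof.
rewrite (_ : (fun n => _) = fun n =>
    b + (a - b) * harmonic n + 0 * (harmonic n * harmonic n)); first exact: cvg_harmonic_poly.
apply/funext => n; have -> : n%:R = n.+1%:R - 1 :> R by rewrite -natr1 addrK.
by rewrite /harmonic /=; field; rewrite addrC natr1 pnatr_eq0.
Qed.

Lemma cvg_ratio_quadratic (a b c : R) :
  (fun n : nat => (a + b * n%:R + c * n%:R ^+ 2) / n.+1%:R ^+ 2) @ \oo --> c.
Proof.
rewrite (_ : (fun n => _) = fun n =>
    c + (b - 2 * c) * harmonic n + (a - b + c) * (harmonic n * harmonic n)).
  exact: cvg_harmonic_poly.
apply/funext => n; have -> : n%:R = n.+1%:R - 1 :> R by rewrite -natr1 addrK.
by rewrite /harmonic /=; field; rewrite addrC natr1 pnatr_eq0.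
Qed.

(* Far from [x0] the quadratic term alone exceeds the oscillation [2 M]. *)
Lemma continuous_bounded_quadratic_bound (f : R -> R) (M x0 e : R) :
  continuous f -> (forall x, `|f x| <= M) -> 0 < e ->
  exists2 K, 0 <= K & forall x, `|f x0 - f x| <= e + K * (x - x0) ^+ 2.
Proof.
move=> cf fM e0; have M0 : 0 <= M := le_trans (normr_ge0 _) (fM 0).
have /cvgrPdist_lt /(_ e e0) /nbhs_ballP [del /= del0 fdel] := cf x0.
have K0 : 0 <= 2 * M / del ^+ 2 by rewrite divr_ge0 ?mulr_ge0 ?exprn_ge0 // ltW.
exists (2 * M / del ^+ 2) => // x.
have Kx0 : 0 <= 2 * M / del ^+ 2 * (x - x0) ^+ 2 by rewrite mulr_ge0 ?sqr_ge0.
have [near|far] := ltP `|x0 - x| del.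
  by rewrite (le_trans (ltW (fdel x _))) ?lerDl //; exact: near.
have osc : `|f x0 - f x| <= 2 * M.
  by rewrite (le_trans (ler_normB _ _)) // mulr2n mulrDl mul1r lerD.
have sq : del ^+ 2 <= (x - x0) ^+ 2.
  have <- : `|x0 - x| ^+ 2 = (x - x0) ^+ 2.
    by rewrite real_normK ?num_real // -sqrrN opprB.
  by rewrite lerXn2r ?nnegrE // ltW.
have := ler_wpM2l K0 sq; rewrite divfK ?expf_neq0 ?gt_eqF //.
lra.
Qed.
Lemma continuous_bounded_quadratic_bound_seq (f : R -> R) (M e : R) (s : seq R) :
  continuous f -> (forall x, `|f x| <= M) -> 0 < e ->
  exists2 K, 0 <= K & forall x0 x, x0 \in s -> `|f x0 - f x| <= e + K * (x - x0) ^+ 2.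
Proof.
move=> cf fM e0; elim: s => [|a s [K K0 IH]]; first by exists 0.
have [Ka Ka0 fa] := @continuous_bounded_quadratic_bound f M a e cf fM e0.
exists (Ka + K) => [|x0 x]; first exact: addr_ge0.
rewrite inE => /orP[/eqP ->|x0s].
  by rewrite (le_trans (fa x)) // lerD2l ler_wpM2r ?sqr_ge0 // lerDl.
by rewrite (le_trans (IH x0 x x0s)) // lerD2l ler_wpM2r ?sqr_ge0 // lerDr.
Qed.

Lemma cvg_EFin_seq (u : nat -> R) (l : R) :
  u @ \oo --> l -> (fun n => (u n)%:E) @ \oo --> l%:E.
Proof. by move=> ul; apply: cvg_EFin => //; exact: nearW. Qed.

End limits.

Section bounded_expectation.
Context {R : realType} {d} {T : measurableType d} (P : probability T R).

Definition bounded_mfun (F : T -> R) :=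
  measurable_fun setT F /\ exists M : R, forall t, `|F t| <= M.

(* [fine] maps the junk values [+oo] and [-oo] to [0]. *)
Definition Efin (F : T -> R) := fine ('E_P[F])%E.

Lemma bounded_mfun_integrable F D : measurable D -> bounded_mfun F ->
  P.-integrable D (EFin \o F).
Proof.
move=> mD [mF [M hM]].
apply: (@le_integrable _ _ _ P D mD _ (EFin \o cst M)).
- exact/measurable_EFinP/(measurable_funS measurableT).
- by move=> t _ /=; rewrite lee_fin (le_trans (hM t)) ?ler_norm.
- exact: finite_measure_integrable_cst.
Qed.

Lemma bounded_mfun_Lfun1 F : bounded_mfun F -> F \in Lfun P 1.
Proof. by move=> hF; apply/Lfun1_integrable/bounded_mfun_integrable. Qed.

Lemma EfinE F : bounded_mfun F -> ('E_P[F] = (Efin F)%:E)%E.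
Proof. by move=> hF; rewrite /Efin fineK ?expectation_fin_num ?bounded_mfun_Lfun1. Qed.

Lemma bounded_mfun_cst c : bounded_mfun (fun _ => c).
Proof. by split; [exact: measurable_cst | exists `|c|]. Qed.

Lemma bounded_mfunD F G : bounded_mfun F -> bounded_mfun G ->
  bounded_mfun (fun t => F t + G t).
Proof.
move=> [mF [M hM]] [mG [N hN]]; split; first exact: measurable_funD.
by exists (M + N) => t; rewrite (le_trans (ler_normD _ _)) ?lerD.
Qed.

Lemma bounded_mfunM F G : bounded_mfun F -> bounded_mfun G ->
  bounded_mfun (fun t => F t * G t).
Proof.
move=> [mF [M hM]] [mG [N hN]]; split; first exact: measurable_funM.
by exists (M * N) => t; rewrite normrM ler_pM.
Qed.

Lemma bounded_mfunN F : bounded_mfun F -> bounded_mfun (fun t => - F t).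
Proof.
move=> hF; rewrite (_ : (fun t => - F t) = (fun t => -1 * F t)).
  exact/bounded_mfunM/hF/bounded_mfun_cst.
by apply/funext => t; rewrite mulN1r.
Qed.

Lemma bounded_mfun_comp (g : R -> R) F M : measurable_fun setT g ->
  (forall x, `|g x| <= M) -> measurable_fun setT F -> bounded_mfun (fun t => g (F t)).
Proof. by move=> mg hg mF; split; [exact: measurableT_comp | exists M]. Qed.

Lemma bounded_mfun_sum (I : Type) (s : seq I) (F : I -> T -> R) :
  (forall i, bounded_mfun (F i)) -> bounded_mfun (fun t => \sum_(i <- s) F i t).
Proof.
move=> hF; elim: s => [|a s IH].
  by under eq_fun do rewrite big_nil; exact: bounded_mfun_cst.
by under eq_fun do rewrite big_cons; exact: bounded_mfunD.
Qed.

Lemma bounded_mfun_prod (I : Type) (s : seq I) (F : I -> T -> R) :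
  (forall i, bounded_mfun (F i)) -> bounded_mfun (fun t => \prod_(i <- s) F i t).
Proof.
move=> hF; elim: s => [|a s IH].
  by under eq_fun do rewrite big_nil; exact: bounded_mfun_cst.
by under eq_fun do rewrite big_cons; exact: bounded_mfunM.
Qed.

Lemma Efin_cst c : Efin (fun _ => c) = c.
Proof. by rewrite /Efin (expectation_cst P c). Qed.

Lemma EfinD F G : bounded_mfun F -> bounded_mfun G ->
  Efin (fun t => F t + G t) = Efin F + Efin G.
Proof.
move=> hF hG; rewrite /Efin.
have /= -> := expectationD (bounded_mfun_Lfun1 hF) (bounded_mfun_Lfun1 hG).
by rewrite fineD ?expectation_fin_num ?bounded_mfun_Lfun1.
Qed.

Lemma EfinZ k F : bounded_mfun F -> Efin (fun t => k * F t) = k * Efin F.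
Proof.
move=> hF; rewrite /Efin (_ : (fun t => k * F t) = k \o* F); last first.
  by apply/funext => t /=; rewrite mulrC.
have /= -> := expectationZl k (bounded_mfun_Lfun1 hF).
by rewrite fineM ?expectation_fin_num ?bounded_mfun_Lfun1.
Qed.

Lemma Efin_div F c : bounded_mfun F -> Efin (fun t => F t / c) = Efin F / c.
Proof.
move=> hF; rewrite mulrC -EfinZ //.
by congr Efin; apply/funext => t; rewrite mulrC.
Qed.

Lemma EfinN F : bounded_mfun F -> Efin (fun t => - F t) = - Efin F.
Proof.
move=> hF; rewrite -mulN1r -EfinZ //.
by congr Efin; apply/funext => t; rewrite mulN1r.
Qed.

Lemma EfinB F G : bounded_mfun F -> bounded_mfun G ->
  Efin (fun t => F t - G t) = Efin F - Efin G.
Proof. by move=> hF hG; rewrite EfinD ?EfinN //; exact: bounded_mfunN. Qed.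

Lemma Efin_sum (I : Type) (s : seq I) (F : I -> T -> R) :
  (forall i, bounded_mfun (F i)) ->
  Efin (fun t => \sum_(i <- s) F i t) = \sum_(i <- s) Efin (F i).
Proof.
move=> hF; elim: s => [|a s IH].
  rewrite big_nil -[RHS]Efin_cst; congr Efin.
  by apply/funext => t; rewrite big_nil.
rewrite big_cons -IH -(EfinD (hF a)); last exact: bounded_mfun_sum.
by congr Efin; apply/funext => t; rewrite big_cons.
Qed.

Lemma ler_Efin F G : bounded_mfun F -> bounded_mfun G ->
  (forall t, F t <= G t) -> Efin F <= Efin G.
Proof.
move=> hF hG FG; rewrite -subr_ge0 -EfinB //.
by apply/fine_ge0/expectation_ge0 => t; rewrite subr_ge0.
Qed.

Lemma ler_norm_Efin F G : bounded_mfun F -> bounded_mfun G ->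
  (forall t, `|F t| <= G t) -> `|Efin F| <= Efin G.
Proof.
move=> hF hG FG; rewrite ler_norml; apply/andP; split.
  rewrite lerNl -EfinN //; apply: ler_Efin => //; first exact: bounded_mfunN.
  by move=> t; have /ler_normlP[] := FG t; rewrite lerNl.
by apply: ler_Efin => // t; have /ler_normlP[] := FG t.
Qed.

End bounded_expectation.

Definition ternary_law {R : realType} {d} {T : measurableType d}
    (P : probability T R) (p q r : R) (F : T -> R) :=
  P [set t | F t = 1] = p%:E /\ P [set t | F t = -1] = q%:E /\ P [set t | F t = 0] = r%:E.

Section independent_ternary.
Context {R : realType} {d} {T : measurableType d} (P : probability T R).
Variables (p q r : R) (Z : nat -> T -> R).
Hypothesis mZ : forall i, measurable_fun setT (Z i).
Hypothesis Z_ternary : forall i t, Z i t = 1 \/ Z i t = -1 \/ Z i t = 0.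
Hypothesis law_Z : forall i, (1 <= i)%N -> ternary_law P p q r (Z i).
Hypothesis indep_Z : mutually_independent P [set n | (1 <= n)%N] Z.

Definition law_mean (g : R -> R) := p * g 1 + q * g (-1) + r * g 0.

Definition cap_preimage (K : seq nat) (B : nat -> set R) :=
  \bigcap_(k in [set` K]) (Z k @^-1` B k).

Lemma cap_preimage_cons a K B :
  cap_preimage (a :: K) B = (Z a @^-1` B a) `&` cap_preimage K B.
Proof.
apply/seteqP; split => t /=.
  by move=> h; split=> [|k kK]; apply: h; rewrite /= inE ?eqxx ?kK ?orbT.
by move=> [h1 h2] k /=; rewrite inE => /orP[/eqP ->|/h2].
Qed.

Lemma measurable_preimage_Z k B : measurable B -> measurable (Z k @^-1` B).
Proof. by move=> mB; rewrite -(setTI (_ @^-1` _)); exact: mZ. Qed.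

Lemma measurable_cap_preimage K B :
  (forall k, measurable (B k)) -> measurable (cap_preimage K B).
Proof.
move=> mB; elim: K => [|a K IH].
  by rewrite (_ : cap_preimage _ _ = setT) //; apply/seteqP; split.
by rewrite cap_preimage_cons; apply: measurableI => //; exact: measurable_preimage_Z.
Qed.

Lemma bounded_mfun_comp_Z (g : R -> R) i :
  measurable_fun setT g -> bounded_mfun (fun t => g (Z i t)).
Proof.
move=> mg; split; first exact: measurableT_comp.
exists (`|g 1| + `|g (-1)| + `|g 0|) => t.
have := normr_ge0 (g 1); have := normr_ge0 (g (-1)); have := normr_ge0 (g 0).
by case: (Z_ternary i t) => [->|[->|->]]; lra.
Qed.

Lemma integral_split_ternary a D (h : T -> R) :
  measurable D -> measurable_fun setT h ->
  (\int[P]_(t in D) (h t)%:E =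
   \int[P]_(t in [set t | Z a t = 1%R] `&` D) (h t)%:E +
   \int[P]_(t in [set t | Z a t = (-1)%R] `&` D) (h t)%:E +
   \int[P]_(t in [set t | Z a t = 0%R] `&` D) (h t)%:E)%E.
Proof.
move=> mD mh.
have mA v : measurable ([set t | Z a t = v] `&` D).
  by apply: measurableI => //; exact: measurable_preimage_Z (measurable_set1 v).
have mEh (A : set T) : measurable_fun A (fun t => (h t)%:E).
  exact/measurable_EFinP/(measurable_funS measurableT).
have DE : D = [set t | Z a t = 1] `&` D `|` [set t | Z a t = -1] `&` D
              `|` [set t | Z a t = 0] `&` D.
  apply/seteqP; split=> [t Dt|t [[[_ ?]|[_ ?]]|[_ ?]] //].
  by case: (Z_ternary a t) => [?|[?|?]]; [left; left|left; right|right].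
rewrite {1}DE !integral_setU //; try exact: measurableU.
- apply/eqP/seteqP; split=> // t /= [[-> _] [+ _]]; lra.
- apply/eqP/seteqP; split=> // t /= [[[-> _]|[-> _]] [+ _]]; lra.
Qed.

(* Induction on [J], splitting the domain along the value [v] of [Z a] for the
   head [a] of [J]: the piece where [Z a = v] is again a [cap_preimage], which
   is why the integral is taken over an arbitrary [cap_preimage K B] with [K]
   disjoint from [J]. *)
Lemma integral_prod_Z (J K : seq nat) (g : nat -> R -> R) (B : nat -> set R) :
  uniq J -> all (leq 1) J -> (forall j, measurable_fun setT (g j)) ->
  uniq K -> all (leq 1) K -> all [predC J] K -> (forall k, measurable (B k)) ->
  (\int[P]_(t in cap_preimage K B) (\prod_(j <- J) g j (Z j t))%:E =
   (\prod_(j <- J) law_mean (g j) * \prod_(k <- K) fine (P (Z k @^-1` B k)))%:E)%E.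
Proof.
elim: J K B => [|a J IH] K B uJ pJ mg uK pK nK mB.
  under eq_integral do rewrite big_nil.
  rewrite integral_cst; last exact: measurable_cap_preimage.
  have sK : {subset K <= [set n | (1 <= n)%N]} by move=> k /(allP pK); rewrite in_setE.
  rewrite big_nil mul1r mul1e; transitivity (\prod_(k <- K) P (Z k @^-1` B k))%E.
    exact: indep_Z.
  rewrite -prodEFin; apply: eq_bigr => k _.
  by rewrite fineK // fin_num_measure //; exact: measurable_preimage_Z.
move: uJ pJ => /= /andP[aJ uJ] /andP[a1 pJ].
have aK : a \notin K by apply/negP => /(allP nK); rewrite /= inE eqxx.
have nK' : all [predC J] K.
  by apply/allP => k /(allP nK); rewrite /= inE negb_or => /andP[].
pose Bv (v : R) j := if j == a then [set v] else B j.
have mBv v k : measurable (Bv v k) by rewrite /Bv; case: ifP.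
have BvK v : cap_preimage K (Bv v) = cap_preimage K B.
  by apply: eq_bigcapr => k /= kK; rewrite /Bv; case: eqP => // ka; rewrite -ka kK in aK.
have piece v : (\int[P]_(t in [set t | Z a t = v] `&` cap_preimage K B)
      (\prod_(j <- a :: J) g j (Z j t))%:E =
    (g a v * fine (P [set t | Z a t = v]) *
     (\prod_(j <- J) law_mean (g j) * \prod_(k <- K) fine (P (Z k @^-1` B k))))%:E)%E.
  have -> : [set t | Z a t = v] `&` cap_preimage K B = cap_preimage (a :: K) (Bv v).
    by rewrite cap_preimage_cons BvK /Bv eqxx.
  rewrite (eq_integral (fun t => (g a v)%:E * (\prod_(j <- J) g j (Z j t))%:E)%E); last first.
    move=> t; rewrite inE cap_preimage_cons /Bv eqxx big_cons EFinM.
    by move=> -[/= -> _].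
  have mC := measurable_cap_preimage (a :: K) (mBv v).
  rewrite integralZl //; last first.
    apply: bounded_mfun_integrable => //.
    by apply: bounded_mfun_prod => j; exact: bounded_mfun_comp_Z.
  rewrite IH //= ?aK ?uK ?a1 ?pK ?aJ ?nK' //.
  rewrite -EFinM big_cons; congr EFin.
  have -> : \prod_(k <- K) fine (P (Z k @^-1` Bv v k)) =
            \prod_(k <- K) fine (P (Z k @^-1` B k)).
    by apply: eq_big_seq => k kK; rewrite /Bv; case: eqP => // ka; rewrite -ka kK in aK.
  by rewrite /Bv eqxx (_ : Z a @^-1` [set v] = [set t | Z a t = v]) //; ring.
have [P1 [P2 P3]] := law_Z a1.
rewrite (integral_split_ternary a (measurable_cap_preimage K mB)); last first.
  by apply: measurable_prod => j _; exact: measurableT_comp.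
by rewrite !piece P1 P2 P3 /= -!EFinD big_cons /law_mean; congr EFin; ring.
Qed.

Lemma Efin_prod_Z (J : seq nat) (g : nat -> R -> R) :
  uniq J -> all (leq 1) J -> (forall j, measurable_fun setT (g j)) ->
  Efin P (fun t => \prod_(j <- J) g j (Z j t)) = \prod_(j <- J) law_mean (g j).
Proof.
move=> uJ pJ mg.
have := @integral_prod_Z J [::] g (fun _ => setT) uJ pJ mg erefl erefl erefl
  (fun _ => measurableT).
have -> : cap_preimage [::] (fun _ => setT) = setT by apply/seteqP; split.
by rewrite big_nil mulr1 /Efin expectation.unlock => ->.
Qed.

Lemma Efin_comp_Z (g : R -> R) i : (1 <= i)%N -> measurable_fun setT g ->
  Efin P (fun t => g (Z i t)) = law_mean g.
Proof.
move=> i1 mg; have := @Efin_prod_Z [:: i] (fun _ => g); rewrite big_seq1 /= i1.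
by under eq_fun do rewrite big_seq1; apply.
Qed.

Lemma Efin_prod2_Z i j (g h : R -> R) : (1 <= i)%N -> (1 <= j)%N -> i != j ->
  measurable_fun setT g -> measurable_fun setT h ->
  Efin P (fun t => g (Z i t) * h (Z j t)) = law_mean g * law_mean h.
Proof.
move=> i1 j1 ij mg mh.
pose G m := if m == i then g else h.
have := @Efin_prod_Z [:: i; j] G; rewrite /= inE ij i1 j1 /=.
rewrite !big_cons !big_nil /G eqxx eq_sym (negbTE ij) mulr1.
under eq_fun do rewrite !big_cons big_nil eqxx eq_sym (negbTE ij) mulr1.
by apply=> // m; rewrite /G; case: ifP.
Qed.

Lemma Efin_prod3_Z i j k (g h l : R -> R) : (1 <= i)%N -> (1 <= j)%N -> (1 <= k)%N ->
  i != j -> i != k -> j != k ->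
  measurable_fun setT g -> measurable_fun setT h -> measurable_fun setT l ->
  Efin P (fun t => g (Z i t) * h (Z j t) * l (Z k t)) =
  law_mean g * law_mean h * law_mean l.
Proof.
move=> i1 j1 k1 ij ik jk mg mh ml.
pose G m := if m == i then g else if m == j then h else l.
have := @Efin_prod_Z [:: i; j; k] G; rewrite /= !inE negb_or ij ik jk i1 j1 k1 /=.
have Gi : G i = g by rewrite /G eqxx.
have Gj : G j = h by rewrite /G eq_sym (negbTE ij) eqxx.
have Gk : G k = l by rewrite /G eq_sym (negbTE ik) eq_sym (negbTE jk).
rewrite !big_cons big_nil Gi Gj Gk mulr1 mulrA.
under eq_fun do rewrite !big_cons big_nil Gi Gj Gk mulr1 mulrA.
by apply=> // m; rewrite /G; case: ifP => _ //; case: ifP.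
Qed.

Lemma law_mean_id : law_mean id = p - q.
Proof. by rewrite /law_mean; ring. Qed.

Lemma law_mean_sqr : law_mean (fun x => x ^+ 2) = p + q.
Proof. by rewrite /law_mean; ring. Qed.

Lemma measurable_sqr : measurable_fun setT (fun x : R => x ^+ 2).
Proof. exact: exprn_measurable. Qed.

Lemma Efin_Z i : (1 <= i)%N -> Efin P (Z i) = p - q.
Proof.
by move=> i1; rewrite -law_mean_id; apply: Efin_comp_Z => //; exact: measurable_id.
Qed.

Lemma Efin_Zsqr i : (1 <= i)%N -> Efin P (fun t => Z i t ^+ 2) = p + q.
Proof.
by move=> i1; rewrite -law_mean_sqr; apply: Efin_comp_Z => //; exact: measurable_sqr.
Qed.

Lemma bounded_mfun_Z i : bounded_mfun (Z i).
Proof. by apply: (bounded_mfun_comp_Z (g := fun x => x)); exact: measurable_id. Qed.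

(* [S_(n+1) = Z 1 * W n] for the walk driven by [Z]. *)
Definition W n t := 1 + \sum_(2 <= k < n.+2) Z k t.

Lemma bounded_mfun_W n : bounded_mfun (W n).
Proof.
apply/bounded_mfunD/bounded_mfun_sum => [|k].
  exact: bounded_mfun_cst.
exact: bounded_mfun_Z.
Qed.

Lemma Efin_mulW (A : T -> R) n : bounded_mfun A ->
  Efin P (fun t => A t * W n t) =
  Efin P A + \sum_(2 <= k < n.+2) Efin P (fun t => A t * Z k t).
Proof.
move=> hA; have hAZ k : bounded_mfun (fun t => A t * Z k t).
  exact/bounded_mfunM/bounded_mfun_Z.
rewrite -Efin_sum // -EfinD //; last exact: bounded_mfun_sum.
by congr Efin; apply/funext => t; rewrite /W mulrDr mulr1 mulr_sumr.
Qed.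

Lemma sumr_const_nat2 n (x : R) : \sum_(2 <= k < n.+2) x = n%:R * x.
Proof. by rewrite sumr_const_nat subSS subSS subn0 mulr_natl. Qed.

Lemma Efin_Z1W n : Efin P (fun t => Z 1 t * W n t) = (p - q) + n%:R * (p - q) ^+ 2.
Proof.
rewrite Efin_mulW; last exact: bounded_mfun_Z.
rewrite Efin_Z // -sumr_const_nat2; congr (_ + _); apply: eq_big_nat => k /andP[k2 _].
rewrite (@Efin_prod2_Z 1 k id id) ?law_mean_id ?expr2 //; try exact: measurable_id; lia.
Qed.

Lemma bounded_mfun_Zsqr i : bounded_mfun (fun t => Z i t ^+ 2).
Proof. exact: (bounded_mfun_comp_Z _ measurable_sqr). Qed.

Lemma Efin_Z1sqrW n :
  Efin P (fun t => Z 1 t ^+ 2 * W n t) = (p + q) + n%:R * ((p + q) * (p - q)).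
Proof.
rewrite Efin_mulW; last exact: (@bounded_mfun_Zsqr 1).
rewrite Efin_Zsqr // -sumr_const_nat2; congr (_ + _); apply: eq_big_nat => k /andP[k2 _].
rewrite (@Efin_prod2_Z 1 k (fun x => x ^+ 2) id) ?law_mean_sqr ?law_mean_id //;
  by [exact: measurable_sqr | exact: measurable_id | lia].
Qed.

Lemma Efin_Z1sqrZW n : Efin P (fun t => Z 1 t ^+ 2 * Z n.+2 t * W n t) =
  (p + q) * (p - q) + n%:R * ((p + q) * (p - q) ^+ 2).
Proof.
have hA : bounded_mfun (fun t => Z 1 t ^+ 2 * Z n.+2 t).
  exact/bounded_mfunM/bounded_mfun_Z/bounded_mfun_Zsqr.
rewrite Efin_mulW //.
rewrite (@Efin_prod2_Z 1 n.+2 (fun x => x ^+ 2) id) ?law_mean_sqr ?law_mean_id //;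
  try exact: measurable_sqr; try exact: measurable_id.
rewrite -sumr_const_nat2; congr (_ + _); apply: eq_big_nat => k /andP[k2 kn].
rewrite (@Efin_prod3_Z 1 n.+2 k (fun x => x ^+ 2) id id) ?law_mean_sqr ?law_mean_id;
  try exact: measurable_sqr; try exact: measurable_id; try lia.
by rewrite expr2 mulrA.
Qed.

Lemma Efin_Z1sqrWsqr n : Efin P (fun t => Z 1 t ^+ 2 * W n t ^+ 2) =
  (p + q) * (1 + (2 * (p - q) + (p + q) - (p - q) ^+ 2) * n%:R + (p - q) ^+ 2 * n%:R ^+ 2).
Proof.
elim: n => [|n IH].
  rewrite (_ : (fun t => _) = (fun t => Z 1 t ^+ 2)); last first.
    by apply/funext => t; rewrite /W big_geq // addr0 expr1n mulr1.
  by rewrite Efin_Zsqr //; ring.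
have hA : bounded_mfun (fun t => Z 1 t ^+ 2 * W n t ^+ 2).
  exact: bounded_mfunM (bounded_mfun_Zsqr 1)
    (bounded_mfunM (bounded_mfun_W n) (bounded_mfun_W n)).
have hB := bounded_mfunM
  (bounded_mfunM (bounded_mfun_Zsqr 1) (bounded_mfun_Z n.+2)) (bounded_mfun_W n).
have hC := bounded_mfunM (bounded_mfun_Zsqr 1) (bounded_mfun_Zsqr n.+2).
rewrite (_ : (fun t => _) = (fun t => Z 1 t ^+ 2 * W n t ^+ 2 +
    (2 * (Z 1 t ^+ 2 * Z n.+2 t * W n t) + Z 1 t ^+ 2 * Z n.+2 t ^+ 2))); last first.
  apply/funext => t; rewrite /W big_nat_recr //=.
  by set S := \sum_(2 <= i < n.+2) Z i t; ring.
rewrite EfinD //; last exact/bounded_mfunD/hC/bounded_mfunM/hB/bounded_mfun_cst.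
rewrite EfinD //; last exact/bounded_mfunM/hB/bounded_mfun_cst.
rewrite EfinZ // IH Efin_Z1sqrZW.
rewrite (@Efin_prod2_Z 1 n.+2 (fun x => x ^+ 2) (fun x => x ^+ 2)) ?law_mean_sqr //;
  try exact: measurable_sqr.
by rewrite -[n.+1]addn1 natrD; ring.
Qed.

End independent_ternary.

Definition rho {R : realType} (x : R) : R :=
  if x == 1 then 1 else if x == -1 then -1 else 0.

Section rho.
Context {R : realType}.
Implicit Type x : R.

Lemma measurable_rho : measurable_fun setT (@rho R).
Proof.
rewrite (_ : rho = \1_[set 1] \- \1_[set -1]).
  by apply: measurable_funB; apply: measurable_indic; exact: measurable_set1.
apply/funext => x /=; rewrite /rho !indicE !in_set1.
have N1 : (1 == -1 :> R) = false by apply/eqP; lra.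
case: eqVneq => [->|_]; first by rewrite N1 mulr1n mulr0n subr0.
by case: eqVneq => _; rewrite ?mulr1n mulr0n; lra.
Qed.

Lemma rho_ternary x : rho x = 1 \/ rho x = -1 \/ rho x = 0.
Proof. by rewrite /rho; case: ifP => _; [left | case: ifP => _; auto]. Qed.

Lemma rho_fix x : x = 1 \/ x = -1 \/ x = 0 -> rho x = x.
Proof.
have N1 : (-1 == 1 :> R) = false by apply/eqP; lra.
have O1 : (0 == 1 :> R) = false by apply/eqP; lra.
have ON1 : (0 == -1 :> R) = false by apply/eqP; lra.
by rewrite /rho => -[->|[->|->]]; rewrite ?eqxx ?N1 ?O1 ?ON1.
Qed.

Lemma rho_eq1 x : rho x = 1 <-> x = 1.
Proof.
split=> [|->]; last by rewrite rho_fix //; left.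
by rewrite /rho; case: eqVneq => // _; case: ifP => _ h; lra.
Qed.

Lemma rho_eqN1 x : rho x = -1 <-> x = -1.
Proof.
split=> [|->]; last by rewrite rho_fix //; right; left.
by rewrite /rho; case: ifP => _ h; [lra | case: eqVneq h => // _ h; lra].
Qed.

End rho.

Section ternary_variable.
Context {R : realType} {d} {T : measurableType d} (P : probability T R).
Variables (p q r : R) (F : T -> R).
Hypotheses (pqr1 : p + q + r = 1) (mF : measurable_fun setT F)
  (lawF : ternary_law P p q r F).

Lemma measurable_level v : measurable [set t | F t = v].
Proof. by have := mF measurableT (measurable_set1 v); rewrite setTI. Qed.

Lemma measure_level_pm1 :
  P ([set t | F t = 1] `|` [set t | F t = -1]) = (p + q)%:E.
Proof.
have [P1 [P2 _]] := lawF.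
rewrite measureU; try exact: measurable_level; first by rewrite EFinD -P1 -P2.
by apply/seteqP; split=> // t /= [-> ]; lra.
Qed.

Lemma ternary_law_rho : ternary_law P p q r (fun t => rho (F t)).
Proof.
have [P1 [P2 _]] := lawF.
have E1 : [set t | rho (F t) = 1] = [set t | F t = 1].
  by apply/seteqP; split=> t /= /rho_eq1.
have EN1 : [set t | rho (F t) = -1] = [set t | F t = -1].
  by apply/seteqP; split=> t /= /rho_eqN1.
have E0 : [set t | rho (F t) = 0] = ~` ([set t | F t = 1] `|` [set t | F t = -1]).
  apply/seteqP; split=> t /=.
    by move=> h [/rho_eq1|/rho_eqN1]; rewrite h; lra.
  by case: (rho_ternary (F t)) => [/rho_eq1|[/rho_eqN1|//]] ? []; [left|right].
rewrite /ternary_law E1 EN1 E0 P1 P2 probability_setC; last first.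
  by apply: measurableU; exact: measurable_level.
rewrite measure_level_pm1 -EFinB; split=> //; split=> //; congr EFin.
by rewrite -pqr1 addrC addKr.
Qed.

Lemma rho_ae : {ae P, forall t, rho (F t) = F t}.
Proof.
have [_ [_ P3]] := lawF.
pose A := [set t | F t = 1] `|` [set t | F t = -1] `|` [set t | F t = 0].
have mA12 : measurable ([set t | F t = 1] `|` [set t | F t = -1]).
  by apply: measurableU; exact: measurable_level.
have mA : measurable A by apply: measurableU => //; exact: measurable_level.
have PA : P A = 1%E.
  rewrite measureU //; last 2 first.
  - exact: measurable_level.
  - by apply/seteqP; split=> // t /= [[->|->] ]; lra.
  transitivity ((p + q)%:E + r%:E)%E; last by rewrite -EFinD pqr1.
  by congr (_ + _)%E; [exact: measure_level_pm1 | exact: P3].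
exists (~` A); split; [exact: measurableC | by rewrite probability_setC // PA subee |].
move=> t /= Ft [[|]|] vt; apply: Ft; rewrite rho_fix // vt.
all: by [left | right; left | right; right].
Qed.

End ternary_variable.

Section elephant_walk.
Context {R : realType} {d} {T : measurableType d} (P : probability T R).
Variables (p q r : R) (X1 : T -> R) (eta : nat -> T -> R).
Hypotheses (pqr1 : p + q + r = 1) (mX1 : measurable_fun setT X1)
  (meta : forall n, (2 <= n)%N -> measurable_fun setT (eta n))
  (lawX1 : ternary_law P p q r X1)
  (law_eta : forall n, (2 <= n)%N -> ternary_law P p q r (eta n))
  (indep : mutually_independent P [set n | (1 <= n)%N]
             (fun n => if n == 1%N then X1 else eta n)).

(* Unlike the family of the statement, [erw_Y 0 = X1], so that every [erw_Y n]
   is measurable with the ternary law. *)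
Definition erw_Y n := if (n <= 1)%N then X1 else eta n.

Definition erw_Z n t := rho (erw_Y n t).

Lemma measurable_erw_Y n : measurable_fun setT (erw_Y n).
Proof. by rewrite /erw_Y; case: leqP => // n1; exact: meta. Qed.

Lemma law_erw_Y n : ternary_law P p q r (erw_Y n).
Proof. by rewrite /erw_Y; case: leqP => // n1; exact: law_eta. Qed.

Lemma measurable_erw_Z n : measurable_fun setT (erw_Z n).
Proof. exact: measurableT_comp measurable_rho (measurable_erw_Y n). Qed.

Lemma erw_Z_ternary n t : erw_Z n t = 1 \/ erw_Z n t = -1 \/ erw_Z n t = 0.
Proof. exact: rho_ternary. Qed.

Lemma law_erw_Z n : ternary_law P p q r (erw_Z n).
Proof. exact: ternary_law_rho pqr1 (measurable_erw_Y n) (law_erw_Y n). Qed.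

Lemma indep_erw_Z : mutually_independent P [set n | (1 <= n)%N] erw_Z.
Proof.
move=> J B uJ sJ mB.
have mB' j : measurable (rho @^-1` B j).
  by rewrite -[X in measurable X]setTI; exact: measurable_rho.
have preE j : [set` J] j ->
    erw_Z j @^-1` B j = (if j == 1%N then X1 else eta j) @^-1` (rho @^-1` B j).
  move=> /sJ; rewrite in_setE /= => j1; rewrite /erw_Z /erw_Y.
  by case: eqVneq => [->|jn1] //; rewrite leqNgt ltn_neqAle eq_sym jn1 j1.
rewrite (eq_bigcapr preE) (indep uJ sJ mB').
by apply: eq_big_seq => j jJ; rewrite preE.
Qed.

Lemma erw_Z_ae : {ae P, forall t, forall n, erw_Z n t = erw_Y n t}.
Proof. by apply: ae_foralln => n; exact: rho_ae pqr1 (measurable_erw_Y n) (law_erw_Y n). Qed.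

Lemma erw_SE n t :
  erw_S X1 eta n.+1 t = erw_Y 1 t * (1 + \sum_(2 <= k < n.+2) erw_Y k t).
Proof.
rewrite /erw_S big_ltn // {1}/erw_X /= mulrDr mulr1 mulr_sumr; congr (_ + _).
by apply: eq_big_nat => k /andP[k2 _]; rewrite /erw_X /erw_Y leqNgt k2 /= mulrC.
Qed.

Let mZ := measurable_erw_Z.
Let Zt := erw_Z_ternary.
Let lawZ n (_ : (1 <= n)%N) := law_erw_Z n.
Let indepZ := indep_erw_Z.

Lemma measurable_erw_S n : measurable_fun setT (erw_S X1 eta n.+1).
Proof.
rewrite (_ : erw_S _ _ _ = fun t => erw_Y 1 t * (1 + \sum_(2 <= k < n.+2) erw_Y k t)).
  apply: measurable_funM; first exact: measurable_erw_Y.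
  by apply: measurable_funD => //; apply: measurable_sum => k; exact: measurable_erw_Y.
by apply/funext => t; rewrite erw_SE.
Qed.

Lemma expectation_comp_erw_S (F : R -> R) n : measurable_fun setT F ->
  bounded_mfun (fun t => F (erw_Z 1 t * W erw_Z n t)) ->
  ('E_P[F \o erw_S X1 eta n.+1] = (Efin P (fun t => F (erw_Z 1 t * W erw_Z n t)))%:E)%E.
Proof.
move=> mF hF; rewrite -EfinE // !expectation.unlock; apply: ae_eq_integral => //.
- exact/measurable_EFinP/measurableT_comp/measurable_erw_S.
- exact/measurable_EFinP/hF.1.
apply: filterS erw_Z_ae => t hZ _ /=; rewrite erw_SE /W.
congr (EFin (F (_ * (1 + _)))); first exact: esym (hZ 1%N).
by apply: eq_bigr => k _; exact: esym (hZ k).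
Qed.

Definition erw_avg n t := erw_S X1 eta n t / n%:R.

Lemma bounded_mfun_Z1W n : bounded_mfun (fun t => erw_Z 1 t * W erw_Z n t).
Proof. exact: bounded_mfunM (bounded_mfun_Z mZ Zt 1) (bounded_mfun_W mZ Zt n). Qed.

Lemma measurable_divr (c : R) : measurable_fun setT (fun x : R => x / c).
Proof. by apply: measurable_funM; [exact: measurable_id | exact: measurable_cst]. Qed.

Lemma expectation_erw_avg n : ('E_P[erw_avg n.+1] =
  (Efin P (fun t => erw_Z 1 t * W erw_Z n t) / n.+1%:R)%:E)%E.
Proof.
rewrite (_ : erw_avg _ = (fun x => x / n.+1%:R) \o erw_S X1 eta n.+1) //.
rewrite expectation_comp_erw_S.
- by rewrite Efin_div //; exact: bounded_mfun_Z1W.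
- exact: measurable_divr.
- by apply: bounded_mfunM; [exact: bounded_mfun_Z1W | exact: bounded_mfun_cst].
Qed.

Lemma bounded_mfun_Z1sqrWsqr n :
  bounded_mfun (fun t => erw_Z 1 t ^+ 2 * W erw_Z n t ^+ 2).
Proof.
have hZW := bounded_mfun_Z1W n.
by have := bounded_mfunM hZW hZW; congr bounded_mfun; apply/funext => t; rewrite -exprMn expr2.
Qed.

Lemma variance_erw_avg n : ('V_P[erw_avg n.+1] =
  (Efin P (fun t => erw_Z 1 t ^+ 2 * W erw_Z n t ^+ 2) / n.+1%:R ^+ 2
   - (Efin P (fun t => erw_Z 1 t * W erw_Z n t) / n.+1%:R) ^+ 2)%:E)%E.
Proof.
rewrite /variance covariance.unlock expectation_erw_avg /=.
set m := _ / _; set c := n.+1%:R.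
have c0 : c != 0 by rewrite pnatr_eq0.
have hZW := bounded_mfun_Z1W n.
have hZW2 := bounded_mfun_Z1sqrWsqr n.
rewrite (_ : (_ \- _) * (_ \- _) = (fun x => (x / c - m) ^+ 2) \o erw_S X1 eta n.+1) //.
rewrite expectation_comp_erw_S; first last.
- by apply/bounded_mfunM; apply/bounded_mfunD; [apply/bounded_mfunM/bounded_mfun_cst|
    exact: bounded_mfun_cst | apply/bounded_mfunM/bounded_mfun_cst | exact: bounded_mfun_cst].
- by apply: measurable_funM; apply: measurable_funB => //; exact: measurable_divr.
congr EFin.
rewrite (_ : (fun t => _) = fun t =>
    c ^- 2 * (erw_Z 1 t ^+ 2 * W erw_Z n t ^+ 2) +
    (- 2 * m / c * (erw_Z 1 t * W erw_Z n t) + m ^+ 2)).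
  rewrite EfinD; last 2 first.
  - exact: bounded_mfunM (bounded_mfun_cst _) hZW2.
  - exact: bounded_mfunD (bounded_mfunM (bounded_mfun_cst _) hZW) (bounded_mfun_cst _).
  rewrite EfinD; last 2 first.
  - exact: bounded_mfunM (bounded_mfun_cst _) hZW.
  - exact: bounded_mfun_cst.
  by rewrite Efin_cst !EfinZ // /m; field.
by apply/funext => t /=; field.
Qed.

Lemma Efin_sqr_dist_erw_avg n :
  Efin P (fun t => (erw_Z 1 t * W erw_Z n t / n.+1%:R - (p - q) * erw_Z 1 t) ^+ 2) =
  Efin P (fun t => erw_Z 1 t ^+ 2 * W erw_Z n t ^+ 2) / n.+1%:R ^+ 2
  - 2 * (p - q) * (Efin P (fun t => erw_Z 1 t ^+ 2 * W erw_Z n t) / n.+1%:R)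
  + (p - q) ^+ 2 * (p + q).
Proof.
set c := n.+1%:R; have c0 : c != 0 by rewrite pnatr_eq0.
have hZ2 := bounded_mfun_Zsqr mZ Zt 1.
have hZ2W := bounded_mfunM hZ2 (bounded_mfun_W mZ Zt n).
rewrite (_ : (fun t => _) = fun t => c ^- 2 * (erw_Z 1 t ^+ 2 * W erw_Z n t ^+ 2) +
    (- 2 * (p - q) / c * (erw_Z 1 t ^+ 2 * W erw_Z n t) + (p - q) ^+ 2 * erw_Z 1 t ^+ 2)).
  rewrite EfinD; last 2 first.
  - exact: bounded_mfunM (bounded_mfun_cst _) (bounded_mfun_Z1sqrWsqr n).
  - exact: bounded_mfunD (bounded_mfunM (bounded_mfun_cst _) hZ2W)
      (bounded_mfunM (bounded_mfun_cst _) hZ2).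
  rewrite EfinD; last 2 first.
  - exact: bounded_mfunM (bounded_mfun_cst _) hZ2W.
  - exact: bounded_mfunM (bounded_mfun_cst _) hZ2.
  rewrite !EfinZ //; last exact: bounded_mfun_Z1sqrWsqr.
  by rewrite (Efin_Zsqr mZ Zt lawZ indepZ (i := 1)) //; field.
by apply/funext => t /=; field.
Qed.

Lemma cvg_expectation_erw_avg :
  ((fun n => 'E_P[erw_avg n.+1]) @ \oo --> ((p - q) ^+ 2)%:E)%E.
Proof.
under eq_fun do rewrite expectation_erw_avg (Efin_Z1W mZ Zt lawZ indepZ).
apply: cvg_EFin_seq; apply: cvg_trans (@cvg_ratio_linear R (p - q) ((p - q) ^+ 2)).
by apply: near_eq_cvg; apply: nearW => n; rewrite ?fctE /=; ring.
Qed.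

Lemma cvg_variance_erw_avg : ((fun n => 'V_P[erw_avg n.+1]) @ \oo -->
  ((p - q) ^+ 2 * (p + q - (p - q) ^+ 2))%:E)%E.
Proof.
have mean := @cvg_ratio_linear R (p - q) ((p - q) ^+ 2).
have lim := cvgB (cvgM (cvg_cst (p + q))
  (@cvg_ratio_quadratic R 1 (2 * (p - q) + (p + q) - (p - q) ^+ 2) ((p - q) ^+ 2)))
  (cvgM mean mean).
rewrite [X in _ --> X](_ : _ = (p - q) ^+ 2 * (p + q - (p - q) ^+ 2)) in lim; last by ring.
under eq_fun do rewrite variance_erw_avg (Efin_Z1sqrWsqr mZ Zt lawZ indepZ)
  (Efin_Z1W mZ Zt lawZ indepZ).
apply: cvg_EFin_seq; apply: cvg_trans; last exact: lim.
by apply: near_eq_cvg; apply: nearW => n; rewrite ?fctE /=; ring.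
Qed.

Lemma cvg_Efin_sqr_dist_erw_avg : (fun n =>
  Efin P (fun t => (erw_Z 1 t * W erw_Z n t / n.+1%:R - (p - q) * erw_Z 1 t) ^+ 2))
  @ \oo --> 0.
Proof.
have lim := cvgD (cvgB (cvgM (cvg_cst (p + q))
  (@cvg_ratio_quadratic R 1 (2 * (p - q) + (p + q) - (p - q) ^+ 2) ((p - q) ^+ 2)))
  (cvgM (cvg_cst (2 * (p - q))) (@cvg_ratio_linear R (p + q) ((p + q) * (p - q)))))
  (cvg_cst ((p - q) ^+ 2 * (p + q))).
rewrite [X in _ --> X](_ : _ = 0) in lim; last by ring.
under eq_fun do rewrite Efin_sqr_dist_erw_avg (Efin_Z1sqrWsqr mZ Zt lawZ indepZ)
  (Efin_Z1sqrW mZ Zt lawZ indepZ).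
apply: cvg_trans; last exact: lim.
by apply: near_eq_cvg; apply: nearW => n; rewrite ?fctE /=; ring.
Qed.

Lemma expectation_comp_erw_avg (f : R -> R) M n :
  measurable_fun setT f -> (forall x, `|f x| <= M) ->
  ('E_P[f \o erw_avg n.+1] =
   (Efin P (fun t => f (erw_Z 1 t * W erw_Z n t / n.+1%:R)))%:E)%E.
Proof.
move=> mf fM; rewrite (_ : _ \o _ = (fun x => f (x / n.+1%:R)) \o erw_S X1 eta n.+1) //.
rewrite expectation_comp_erw_S //.
- by apply: measurableT_comp => //; exact: measurable_divr.
- apply: bounded_mfun_comp mf fM _.
  by apply: measurable_funM; [exact: (bounded_mfun_Z1W n).1 | exact: measurable_cst].
Qed.

(* [A n] is [erw_avg n.+1] up to a null set, and [B] has the limit law. *)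
Lemma cvg_expectation_comp_erw_avg (f : R -> R) M :
  continuous f -> (forall x, `|f x| <= M) ->
  ((fun n => 'E_P[f \o erw_avg n.+1]) @ \oo -->
   (law_mean p q r (fun x => f ((p - q) * x)))%:E)%E.
Proof.
move=> cf fM; have mf := continuous_measurable_fun cf.
pose A n t := erw_Z 1 t * W erw_Z n t / n.+1%:R.
pose B t := (p - q) * erw_Z 1 t.
have hA n : bounded_mfun (A n) := bounded_mfunM (bounded_mfun_Z1W n) (bounded_mfun_cst _).
have hB : bounded_mfun B := bounded_mfunM (bounded_mfun_cst _) (bounded_mfun_Z mZ Zt 1).
have hfA n : bounded_mfun (fun t => f (A n t)) := bounded_mfun_comp mf fM (hA n).1.
have hfB : bounded_mfun (fun t => f (B t)) := bounded_mfun_comp mf fM hB.1.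
have -> : law_mean p q r (fun x => f ((p - q) * x)) = Efin P (fun t => f (B t)).
  symmetry; apply: (Efin_comp_Z mZ Zt lawZ indepZ (g := fun x => f ((p - q) * x)))=> //.
  by apply: measurableT_comp => //; exact: mulrl_measurable.
under eq_fun do rewrite (expectation_comp_erw_avg _ mf fM).
apply: cvg_EFin_seq; apply/cvgrPdist_le => e e0.
have e20 : 0 < e / 2 by rewrite divr_gt0.
have [K K0 fK] := continuous_bounded_quadratic_bound_seq [:: p - q; - (p - q); 0] cf fM e20.
have near_fB n t : `|f (B t) - f (A n t)| <= e / 2 + K * (A n t - B t) ^+ 2.
  apply: fK; rewrite /B !inE.
  by case: (Zt 1 t) => [->|[->|->]]; rewrite ?mulr1 ?mulrN1 ?mulr0 eqxx ?orbT.
have hD2 n : bounded_mfun (fun t => (A n t - B t) ^+ 2).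
  by apply: bounded_mfunM; apply: bounded_mfunD (hA n) (bounded_mfunN hB).
have hD n : bounded_mfun (fun t => K * (A n t - B t) ^+ 2).
  exact: bounded_mfunM (bounded_mfun_cst _) (hD2 n).
have /cvgrPdist_le /(_ _ e20) :
    (fun n => K * Efin P (fun t => (A n t - B t) ^+ 2)) @ \oo --> 0.
  by rewrite -(mulr0 K); apply: cvgM; [exact: cvg_cst | exact: cvg_Efin_sqr_dist_erw_avg].
apply: filterS => n.
rewrite sub0r normrN => KD; rewrite -EfinB //; last exact: hfA n.
have hfBA : bounded_mfun (fun t => f (B t) - f (A n t)).
  exact: bounded_mfunD hfB (bounded_mfunN (hfA n)).
have hG : bounded_mfun (fun t => e / 2 + K * (A n t - B t) ^+ 2).
  exact: bounded_mfunD (bounded_mfun_cst _) (hD n).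
apply: le_trans (ler_norm_Efin P hfBA hG (near_fB n)) _.
rewrite EfinD; [|exact: bounded_mfun_cst | exact: hD n].
rewrite Efin_cst EfinZ; last exact: hD2 n.
by move: KD => /ler_normlP[_ KD]; lra.
Qed.

End elephant_walk.

Unset Implicit Arguments.

Theorem theorem5p2 (R : realType) (d : measure_display) (T : measurableType d)
  (P : probability T R) (p q r : R)
  (hp : 0 < p < 1) (hq : 0 < q < 1) (hr : 0 < r < 1) (hpqr : p + q + r = 1)
  (X1 : T -> R) (eta : nat -> T -> R)
  (mX1 : measurable_fun setT X1)
  (meta : forall n, (2 <= n)%N -> measurable_fun setT (eta n))
  (dX1 : P [set t | X1 t = 1] = p%:E /\ P [set t | X1 t = -1] = q%:E /\
         P [set t | X1 t = 0] = r%:E)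
  (deta : forall n, (2 <= n)%N ->
         P [set t | eta n t = 1] = p%:E /\ P [set t | eta n t = -1] = q%:E /\
         P [set t | eta n t = 0] = r%:E)
  (indep : mutually_independent P [set n | (1 <= n)%N]
             (fun n => if n == 1%N then X1 else eta n)) :
  let Sn := fun n : nat => fun t => erw_S X1 eta n t / n%:R in
  converges_in_distribution_to_finite_law P Sn
    [:: (p - q, p); (0, r); (- (p - q), q)] /\
  ((fun n => 'E_P[Sn n]) @ \oo --> ((p - q) ^+ 2)%:E)%E /\
  ((fun n => 'V_P[Sn n]) @ \oo --> ((p - q) ^+ 2 * (p + q - (p - q) ^+ 2))%:E)%E.
Proof.
move=> Sn; split; [move=> f cf [M fM] | split]; rewrite -cvg_shiftS.
- rewrite /finite_law_expectation !big_cons big_nil /=.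
  rewrite (_ : _ + _ = law_mean p q r (fun x => f ((p - q) * x))); last first.
    by rewrite /law_mean mulr1 mulrN1 mulr0; ring.
  exact: (cvg_expectation_comp_erw_avg hpqr mX1 meta dX1 deta indep cf fM).
- exact: (cvg_expectation_erw_avg hpqr mX1 meta dX1 deta indep).
- exact: (cvg_variance_erw_avg hpqr mX1 meta dX1 deta indep).
Qed.
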